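(* Let $\mathfrak G_{\mathcal J}=\{a\in\mathfrak G: [a,\mathcal J]\subset\mathcal J\}$. Then the composite map $\frac1\hbar\mathcal J\hookrightarrow\frac1\hbar\mathcal D\to\mathfrak G$ is injective and its image is exactly $\mathfrak G_{\mathcal J}$; i.e. $\mathfrak G_{\mathcal J}=\frac1\hbar\mathcal J$.
   Context: Let $\Bbbk$ be a field of characteristic zero, $V$ a $2n$-dimensional $\Bbbk$-vector space with symplectic form $\omega$. Let $D$ be the universal enveloping algebra of the Heisenberg Lie algebra $V\oplus\Bbbk\hbar$ with $[x,y]=\omega(x,y)\hbar$, $[x,\hbar]=0$ for $x,y\in V$, graded with $V$ in degree 1 and $\hbar$ in degree 2, $D=\bigoplus_{i\ge0}D^i$; let $\mathcal D=\prod_{i\geq0}D^i$ and $\mathcal A=\mathcal D/\hbar\mathcal D$ (a commutative algebra of formal power series). Let $\frac1\hbar\mathcal D$ be the free rank one $\mathcal D$-submodule of $\Bbbk((\hbar))\otimes_{\Bbbk[[\hbar]]}\mathcal D$ generated by $\frac1\hbar$; it is a Lie algebra under the commutator $[a,b]=ab-ba$, and $\mathcal D$ is a Lie ideal in it. Let $\mathfrak G=\frac1\hbar\mathcal D/\frac1\hbar\Bbbk$ (quotient by the central subalgebra $\frac1\hbar D^0$); $\mathfrak G$ acts on $\mathcal D$ by $a\mapsto[a,-]$. Fix a Lagrangian subspace $\mathfrak x\subset V$ and let $\mathcal J\subset\mathcal D$ be the preimage of the ideal $\mathcal A\mathfrak x\subset\mathcal A$ under the projection $\mathcal D\to\mathcal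 A$; $\mathcal J$ is a two-sided ideal. *)

(* Concrete model of the completed Heisenberg enveloping
   algebra  \mathcal D  via the Moyal--Weyl star product. *)
From HB Require Import structures.
From mathcomp Require Import all_boot all_order all_algebra.
Set Implicit Arguments. Unset Strict Implicit. Unset Printing Implicit Defensive.
Import GRing.Theory.
Local Open Scope ring_scope.

Section Weyl.
Variables (K : fieldType) (N : nat).

(* exponent vectors of monomials in the coordinates e_1..e_N of V = K^N *)
Definition mon := {ffun 'I_N -> nat}.
Definition mon0 : mon := [ffun => 0%N].
Definition mon_add (a b : mon) : mon := [ffun i => (a i + b i)%N].
Definition mon_unit (i : 'I_N) : mon := [ffun j => nat_of_bool (j == i)].

(* \mathcal D = prod_i D^i : all formal series  sum_{k,g} c(k,g) hbar^k e^g
   (each graded piece is finite dimensional, so this is the completion) *)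
Definition ser := nat -> mon -> K.
(* \mathcal A = \mathcal D / hbar \mathcal D : formal power series on V *)
Definition cser := mon -> K.

Definition dser (f : ser) (i : 'I_N) : ser :=
  fun k g => ((g i).+1)%:R * f k (mon_add g (mon_unit i)).
Definition dsers (f : ser) (s : seq 'I_N) : ser := foldr (fun i h => dser h i) f s.

Definition cprod (f g : ser) : ser := fun k g0 =>
  \sum_(k1 < k.+1)
   \sum_(d : {ffun 'I_N -> 'I_((\sum_i g0 i)%N).+1} | [forall i, (d i <= g0 i)%N])
     f k1 [ffun i => nat_of_ord (d i)] * g (k - k1)%N [ffun i => (g0 i - d i)%N].

(* Moyal star product for the form omega(e_i,e_j) = W i j :
   f * g = sum_m (hbar/2)^m/m! sum_{I,J} prod_l W_{I_l J_l} d_I f d_J g,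
   so that  e_i * e_j - e_j * e_i = W i j hbar. *)
Definition star (W : 'M[K]_N) (f g : ser) : ser := fun k g0 =>
  \sum_(m < k.+1) ((2 ^ m * m`!)%N%:R)^-1 *
    \sum_(I : m.-tuple 'I_N) \sum_(J : m.-tuple 'I_N)
      (\prod_(l < m) W (tnth I l) (tnth J l)) *
        cprod (dsers f I) (dsers g J) (k - m)%N g0.

Definition cst (c : K) : ser := fun k g => if (k == 0%N) && (g == mon0) then c else 0.
Definition hbar : ser := fun k g => if (k == 1%N) && (g == mon0) then 1 else 0.
Definition sub_ser (f g : ser) : ser := fun k m => f k m - g k m.

Definition proj (f : ser) : cser := fun g => f 0%N g.
Definition amul (f g : cser) : cser := fun g0 =>
  \sum_(d : {ffun 'I_N -> 'I_((\sum_i g0 i)%N).+1} | [forall i, (d i <= g0 i)%N])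
     f [ffun i => nat_of_ord (d i)] * g [ffun i => (g0 i - d i)%N].
Definition alin (v : 'rV[K]_N) : cser := fun g => \sum_i v 0 i * (g == mon_unit i)%:R.

(* the ideal A x of A generated by the row space x of X *)
Definition in_Ax (m : nat) (X : 'M[K]_(m, N)) (p : cser) : Prop :=
  exists f : 'I_m -> cser, p = (fun g => \sum_r amul (f r) (alin (row r X)) g).
(* \mathcal J = preimage of A x under D -> A *)
Definition inJ (m : nat) (X : 'M[K]_(m, N)) (a : ser) : Prop := in_Ax X (proj a).

(* An element a/hbar of (1/hbar) D is represented by a in D.  Two such
   represent the same element of G = (1/hbar)D/(1/hbar)K iff they differ by
   a constant. *)
Definition G_rel (a b : ser) : Prop := exists c : K, a = (fun k g => b k g + cst c k g).

(* [a/hbar] lies in G_J : [a/hbar, b] = (a*b - b*a)/hbar lies in J for all b in J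
   (D is hbar-torsion free, so  (a*b-b*a)/hbar = d  iff  hbar*d = a*b-b*a). *)
Definition in_GJ (W : 'M[K]_N) (m : nat) (X : 'M[K]_(m, N)) (a : ser) : Prop :=
  forall b, inJ X b ->
    exists d, inJ X d /\ star W hbar d = sub_ser (star W a b) (star W b a).

End Weyl.

From HB Require Import structures.
From mathcomp Require Import all_boot all_order all_algebra.
From mathcomp Require Import ring.
From Stdlib Require Import FunctionalExtensionality.
Set Implicit Arguments. Unset Strict Implicit. Unset Printing Implicit Defensive.
Import GRing.Theory.
Local Open Scope ring_scope.

(* Modulo hbar^2 the commutator [a, b]/hbar is the Poisson bracket {a0, b0} of the
   hbar-free parts, and membership in J only depends on the hbar-free part.  Since the
   Lagrangian x is isotropic, {A x, A x} lies in A x, hence J lies in G_J.  Conversely,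
   if a/hbar lies in G_J then {a0, x} lies in A x for every linear form x of x, i.e. the
   derivatives of a0 in the directions omega(x, -) lie in A x.  Euler's identity
   p = sum_k x_k d_k (E^-1 p) (characteristic 0), together with a splitting of every
   coordinate function along x and these directions (possible as x is Lagrangian),
   then puts a0 - a0(0) in A x.  Injectivity holds since elements of J have no
   constant term. *)

Lemma exchange_big3 (R : nmodType) (A B C : finType) (T : A -> B -> C -> R) :
  \sum_a \sum_b \sum_c T a b c = \sum_c \sum_a \sum_b T a b c.
Proof.
transitivity (\sum_a \sum_c \sum_b T a b c).
  by apply: eq_bigr => a _; rewrite exchange_big.
by rewrite exchange_big.
Qed.

Lemma exchange_big22 (R : nmodType) (A B C D : finType) (T : A -> B -> C -> D -> R) :
  \sum_a \sum_b \sum_c \sum_d T a b c d = \sum_c \sum_d \sum_a \sum_b T a b c d.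
Proof.
rewrite exchange_big3; apply: eq_bigr => d _; exact: exchange_big3.
Qed.

Lemma sum_quadratic_mx (K : comPzRingType) (N m : nat) (W : 'M[K]_N) (X : 'M[K]_(m, N))
    (a : 'I_m -> 'I_m -> K) :
  \sum_i \sum_j W i j * (\sum_s \sum_r X s i * X r j * a s r) =
  \sum_s \sum_r (X *m W *m X^T) s r * a s r.
Proof.
transitivity (\sum_i \sum_j \sum_s \sum_r X s i * W i j * X r j * a s r).
  apply: eq_bigr => i _; apply: eq_bigr => j _; rewrite mulr_sumr; apply: eq_bigr => s _.
  rewrite mulr_sumr; apply: eq_bigr => r _.
  by rewrite !mulrA [W i j * X s i]mulrC -!mulrA [W i j * _]mulrCA.
rewrite exchange_big22; apply: eq_bigr => s _; apply: eq_bigr => r _.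
rewrite !mxE [RHS]mulr_suml [LHS]exchange_big; apply: eq_bigr => j _.
by rewrite !mxE !mulr_suml; apply: eq_bigr => i _.
Qed.

Lemma big_tuple0 (R : nmodType) (T : finType) (F : 0.-tuple T -> R) :
  \sum_t F t = F [tuple].
Proof. by rewrite (big_pred1 [tuple]) // => t; rewrite [t]tuple0 /= eq_refl. Qed.

Lemma big_tuple1 (R : nmodType) (T : finType) (F : 1.-tuple T -> R) :
  \sum_t F t = \sum_x F [tuple x].
Proof.
rewrite (reindex (fun x => [tuple x])) //; exists (@thead 0 T) => [x|t] _ //.
by case: t => [[|a [|b s]] //= H]; apply: val_inj.
Qed.

Section PowerSeries.
Variables (K : fieldType) (N : nat).
Local Notation mon := (mon N).
Local Notation cser := (cser K N).
Implicit Types (g e : mon) (i j : 'I_N) (f h p q : cser) (v : 'rV[K]_N).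

Definition deg g := (\sum_i g i)%N.
Definition mon_val B (d : {ffun 'I_N -> 'I_B}) : mon := [ffun i => nat_of_ord (d i)].
Definition mon_sub g e : mon := [ffun i => (g i - e i)%N].
Definition mon_le e g := [forall i, e i <= g i]%N.

Local Notation madd1 g i := (mon_add g (mon_unit i)).
Local Notation msub1 g i := (mon_sub g (mon_unit i)).

Lemma mon_leP e g : reflect (forall i, e i <= g i)%N (mon_le e g).
Proof. exact: forallP. Qed.

Lemma mon_val_inj B : injective (@mon_val B).
Proof.
move=> d1 d2 /ffunP E; apply/ffunP=> i; apply: val_inj.
by move: (E i); rewrite !ffunE.
Qed.

Lemma mon_le_deg g i : (g i <= deg g)%N.
Proof. by rewrite /deg (bigD1 i) //= leq_addr. Qed.

Lemma mon_le_sub g e : mon_le (mon_sub g e) g.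
Proof. by apply/mon_leP=> i; rewrite ffunE leq_subr. Qed.

Lemma mon_le_unit g i : mon_le (mon_unit i) g = (0 < g i)%N.
Proof.
apply/mon_leP/idP=> [/(_ i)|gi j]; first by rewrite ffunE eqxx.
by rewrite ffunE; case: eqP => [->|].
Qed.

Lemma madd1E g i j : madd1 g i j = (g j + (j == i))%N.
Proof. by rewrite !ffunE. Qed.

Lemma msub1E g i j : msub1 g i j = (g j - (j == i))%N.
Proof. by rewrite !ffunE. Qed.

Lemma msub1K g i : msub1 (madd1 g i) i = g.
Proof. by apply/ffunP=> j; rewrite msub1E madd1E addnK. Qed.

Lemma madd1K g i : (0 < g i)%N -> madd1 (msub1 g i) i = g.
Proof.
move=> gi; apply/ffunP=> j; rewrite madd1E msub1E.
by case: eqP => [->|]; rewrite ?subn0 ?addn0 // subnK.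
Qed.

Lemma msub1_madd1 g i j : i != j -> msub1 (madd1 g j) i = madd1 (msub1 g i) j.
Proof.
move=> ij; apply/ffunP=> k; rewrite msub1E madd1E madd1E msub1E.
case: (eqVneq k i) => [->|ki]; first by rewrite ?eqxx (negbTE ij) ?addn0.
by rewrite ?(negbTE ki) !subn0.
Qed.

Lemma msub1C g i j : msub1 (msub1 g i) j = msub1 (msub1 g j) i.
Proof. by apply/ffunP=> k; rewrite !msub1E subnAC. Qed.

Lemma madd1_neq0 g i : (madd1 g i == mon0 N) = false.
Proof. by apply/negbTE/negP=> /eqP/ffunP/(_ i); rewrite madd1E !ffunE eqxx addn1. Qed.

Lemma mon_unitE i : mon_unit i = madd1 (mon0 N) i.
Proof. by apply/ffunP=> j; rewrite madd1E !ffunE. Qed.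

Lemma deg_madd1 g i : deg (madd1 g i) = (deg g).+1.
Proof.
rewrite /deg (bigD1 i) //= [in RHS](bigD1 i) //= madd1E eqxx addn1 addSn; congr _.+1.
by congr addn; apply: eq_bigr => j ji; rewrite madd1E (negbTE ji) addn0.
Qed.

Lemma deg_msub1 g i : (0 < g i)%N -> deg (msub1 g i) = (deg g).-1.
Proof. by move=> gi; rewrite -{2}(madd1K gi) deg_madd1. Qed.

Lemma deg_eq0 g : (deg g == 0%N) = (g == mon0 N).
Proof.
rewrite /deg sum_nat_eq0; apply/forallP/eqP=> [H|-> i]; last by rewrite ffunE.
by apply/ffunP=> i; rewrite ffunE; apply/eqP; exact: (implyP (H i)).
Qed.

Lemma mon_le_msub1 e g i : (0 < g i)%N -> mon_le e (msub1 g i) = mon_le e g && (e i < g i)%N.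
Proof.
move=> gi; apply/idP/idP.
  move/mon_leP=> H; apply/andP; split.
    by apply/mon_leP=> j; apply: leq_trans (H j) _; rewrite ffunE leq_subr.
  by move: (H i); rewrite !ffunE eqxx /= subn1 -ltnS prednK.
case/andP=> /mon_leP H Hi; apply/mon_leP=> j; rewrite !ffunE.
by case: eqP => [->|_]; rewrite ?subn0 // subn1 -ltnS prednK.
Qed.

Lemma sum_mon_le_bound B1 B2 g (F : mon -> K) :
  (forall i, g i <= B1)%N -> (forall i, g i <= B2)%N ->
  \sum_(d : {ffun 'I_N -> 'I_B1.+1} | mon_le (mon_val d) g) F (mon_val d) =
  \sum_(d : {ffun 'I_N -> 'I_B2.+1} | mon_le (mon_val d) g) F (mon_val d).
Proof.
move=> gB1 gB2.
pose h B B' (d : {ffun 'I_N -> 'I_B'}) : {ffun 'I_N -> 'I_B.+1} := [ffun i => inord (d i)].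
have hv B B' d : (forall i, g i <= B)%N -> mon_le (mon_val d) g ->
    mon_val (h B B' d) = mon_val d.
  move=> gB /mon_leP Hd; apply/ffunP=> i; rewrite !ffunE inordK //.
  by move: (Hd i); rewrite ffunE ltnS => /leq_trans; apply.
have hK (d : {ffun 'I_N -> 'I_B2.+1}) :
    (mon_le (mon_val (h B1 _ d)) g && (h B2 _ (h B1 _ d) == d)) = mon_le (mon_val d) g.
  apply/idP/idP=> [/andP[Phd /eqP <-]|Pd]; first by rewrite (hv _ _ _ gB2 Phd).
  have Phd := Pd; rewrite -(hv _ _ _ gB1 Pd) in Phd.
  by rewrite Phd; apply/eqP/mon_val_inj; rewrite (hv _ _ _ gB2 Phd) (hv _ _ _ gB1 Pd).
rewrite (reindex_onto (h B1 B2.+1) (h B2 B1.+1)) /=.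
  by apply: eq_big => [d|d]; [exact: hK | rewrite hK => Pd; rewrite (hv _ _ _ gB1)].
move=> d Pd; have Phd := Pd; rewrite -(hv _ _ _ gB2 Pd) in Phd.
by apply: mon_val_inj; rewrite (hv _ _ _ gB1 Phd) (hv _ _ _ gB2 Pd).
Qed.

Lemma sum_mon_le_sub B g (F : mon -> mon -> K) : (forall i, g i <= B)%N ->
  \sum_(d : {ffun 'I_N -> 'I_B.+1} | mon_le (mon_val d) g) F (mon_val d) (mon_sub g (mon_val d)) =
  \sum_(d : {ffun 'I_N -> 'I_B.+1} | mon_le (mon_val d) g) F (mon_sub g (mon_val d)) (mon_val d).
Proof.
move=> gB.
pose r (d : {ffun 'I_N -> 'I_B.+1}) : {ffun 'I_N -> 'I_B.+1} := [ffun i => inord (g i - d i)].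
have rv d : mon_val (r d) = mon_sub g (mon_val d).
  by apply/ffunP=> i; rewrite !ffunE inordK // ltnS (leq_trans (leq_subr _ _) (gB i)).
have subK d : mon_le (mon_val d) g -> mon_sub g (mon_sub g (mon_val d)) = mon_val d.
  by move/mon_leP=> Hd; apply/ffunP=> i; move: (Hd i); rewrite !ffunE => /subKn.
have rK d : (mon_le (mon_val (r d)) g && (r (r d) == d)) = mon_le (mon_val d) g.
  apply/idP/idP=> [/andP[_ /eqP <-]|Pd]; first by rewrite !rv mon_le_sub.
  by rewrite rv mon_le_sub; apply/eqP/mon_val_inj; rewrite !rv subK.
rewrite (reindex_onto r r).
  by apply: eq_big => [d|d]; [exact: rK | rewrite rK => Pd; rewrite rv subK].
by move=> d Pd; apply: mon_val_inj; rewrite !rv subK.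
Qed.

Lemma sum_mon_le_subE g e (F : mon -> K) :
  \sum_(d : {ffun 'I_N -> 'I_(deg g).+1} | mon_le (mon_val d) g && (mon_sub g (mon_val d) == e))
    F (mon_val d) = if mon_le e g then F (mon_sub g e) else 0.
Proof.
case: ifPn => [/mon_leP eg|eg]; last first.
  by rewrite big_pred0 // => d; apply/negbTE/andP=> [[_ /eqP E]]; rewrite -E mon_le_sub in eg.
pose d0 : {ffun 'I_N -> 'I_(deg g).+1} := [ffun j => inord (g j - e j)].
have d0v : mon_val d0 = mon_sub g e.
  by apply/ffunP=> j; rewrite !ffunE inordK // ltnS (leq_trans (leq_subr _ _) (mon_le_deg g j)).
rewrite (big_pred1 d0) ?d0v // => d /=; apply/idP/eqP=> [/andP[/mon_leP Hd /eqP E]|->].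
  apply/mon_val_inj; rewrite d0v -E; apply/ffunP=> j; rewrite !ffunE subKn //.
  by move: (Hd j); rewrite ffunE.
rewrite d0v mon_le_sub; apply/eqP/ffunP=> j; rewrite !ffunE subKn //; exact: eg.
Qed.

Lemma amulE f h g : amul f h g =
  \sum_(d : {ffun 'I_N -> 'I_(deg g).+1} | mon_le (mon_val d) g)
    f (mon_val d) * h (mon_sub g (mon_val d)).
Proof.
apply: eq_big => [d|d _]; first by apply: eq_forallb => i; rewrite ffunE.
by congr (_ * h _); apply/ffunP => i; rewrite !ffunE.
Qed.

Lemma amulC f h g : amul f h g = amul h f g.
Proof.
rewrite !amulE (sum_mon_le_sub (fun a b => f a * h b)); last exact: mon_le_deg.
by apply: eq_bigr => d _; rewrite mulrC.
Qed.

Lemma eq_amul f1 f2 h1 h2 g : f1 =1 f2 -> h1 =1 h2 -> amul f1 h1 g = amul f2 h2 g.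
Proof. by move=> /functional_extensionality -> /functional_extensionality ->. Qed.

Lemma amul_suml (I : finType) (F : I -> cser) h g :
  amul (fun x => \sum_r F r x) h g = \sum_r amul (F r) h g.
Proof.
rewrite amulE /=; under eq_bigr do rewrite mulr_suml.
by rewrite exchange_big; apply: eq_bigr => r _; rewrite amulE.
Qed.

Lemma amul_sumr (I : finType) (F : I -> cser) h g :
  amul h (fun x => \sum_r F r x) g = \sum_r amul h (F r) g.
Proof. by rewrite amulC amul_suml; apply: eq_bigr => r _; rewrite amulC. Qed.

Lemma amul_scalel c f h g : amul (fun x => c * f x) h g = c * amul f h g.
Proof. by rewrite !amulE mulr_sumr; apply: eq_bigr => d _; rewrite mulrA. Qed.

Lemma amul_addl f1 f2 h g : amul (fun x => f1 x + f2 x) h g = amul f1 h g + amul f2 h g.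
Proof. by rewrite !amulE -big_split; apply: eq_bigr => d _; rewrite mulrDl. Qed.

Definition ccst c : cser := fun x => if x == mon0 N then c else 0.

Lemma amul_ccstr f c g : amul f (ccst c) g = c * f g.
Proof.
rewrite amulE (bigID (fun d => mon_sub g (mon_val d) == mon0 N)) /=.
rewrite [X in _ + X]big1 ?addr0; last by move=> d /andP[_ /negbTE E]; rewrite /ccst E mulr0.
under eq_bigr => d /andP[_ /eqP E] do rewrite /ccst E eqxx mulrC.
have le0g : mon_le (mon0 N) g by apply/mon_leP=> i; rewrite ffunE.
rewrite -mulr_sumr sum_mon_le_subE le0g; congr (_ * f _).
by apply/ffunP=> i; rewrite !ffunE subn0.
Qed.

Lemma amul_ccstl f c g : amul (ccst c) f g = c * f g.
Proof. by rewrite amulC amul_ccstr. Qed.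

Definition xmul i f : cser := fun g => if (0 < g i)%N then f (msub1 g i) else 0.
Definition lmul v f : cser := fun g => \sum_i v 0 i * xmul i f g.

Lemma amul_alinr f v g : amul f (alin v) g = lmul v f g.
Proof.
rewrite amulE /alin /lmul; under eq_bigr do rewrite mulr_sumr.
rewrite exchange_big /=; apply: eq_bigr => i _.
transitivity (v 0 i * \sum_(d : {ffun 'I_N -> 'I_(deg g).+1} | mon_le (mon_val d) g && (mon_sub g (mon_val d) == mon_unit i))
                        f (mon_val d)).
  rewrite big_mkcondr mulr_sumr; apply: eq_bigr => d _.
  by case: eqP => _; rewrite /= ?(mulr1, mulr0) // mulrC.
by rewrite sum_mon_le_subE mon_le_unit /xmul; case: ifP.
Qed.

Lemma alin_lmul v g : alin v g = lmul v (ccst 1) g.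
Proof.
apply: eq_bigr => i _; congr (_ * _); rewrite /xmul /ccst.
case: (eqVneq g (mon_unit i)) => [->|gn].
  have -> : msub1 (mon_unit i) i = mon0 N by apply/ffunP=> j; rewrite !ffunE subnn.
  by rewrite !eqxx ffunE eqxx /= mulr1n.
case: ifP => gi //; case: eqP => // E; case/eqP: gn.
by rewrite -[g](madd1K gi) E -mon_unitE.
Qed.

Lemma eq_lmul v f1 f2 g : f1 =1 f2 -> lmul v f1 g = lmul v f2 g.
Proof. by move=> /functional_extensionality ->. Qed.

Lemma lmul_mon0 v f : lmul v f (mon0 N) = 0.
Proof. by apply: big1 => i _; rewrite /xmul ffunE mulr0. Qed.

Lemma lmul_sum v (I : finType) (F : I -> cser) g :
  lmul v (fun x => \sum_r F r x) g = \sum_r lmul v (F r) g.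
Proof.
rewrite /lmul exchange_big; apply: eq_bigr => i _; rewrite -mulr_sumr; congr (_ * _).
by rewrite /xmul; case: ifP => // _; rewrite big1.
Qed.

Lemma lmul_add v f1 f2 g : lmul v (fun x => f1 x + f2 x) g = lmul v f1 g + lmul v f2 g.
Proof.
rewrite /lmul -big_split; apply: eq_bigr => i _ /=; rewrite -mulrDr; congr (_ * _).
by rewrite /xmul; case: ifP => // _; rewrite addr0.
Qed.

Lemma lmul_scale v c f g : lmul v (fun x => c * f x) g = c * lmul v f g.
Proof.
rewrite /lmul mulr_sumr; apply: eq_bigr => i _; rewrite mulrCA; congr (_ * _).
by rewrite /xmul; case: ifP => // _; rewrite mulr0.
Qed.

Lemma lmul0 v g : lmul v (fun _ => 0) g = 0.
Proof. by rewrite /lmul big1 // => i _; rewrite /xmul; case: ifP; rewrite mulr0. Qed.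

Lemma xmul_sum_scale i (c : 'I_N -> K) (F : 'I_N -> cser) g :
  xmul i (fun x => \sum_j c j * F j x) g = \sum_j c j * xmul i (F j) g.
Proof. by rewrite /xmul; case: ifP => // _; rewrite big1 // => j _; rewrite mulr0. Qed.

Lemma xmulC i j f g : xmul i (xmul j f) g = xmul j (xmul i f) g.
Proof.
rewrite /xmul; case: (eqVneq i j) => [->//|ij].
rewrite !msub1E (negbTE ij) eq_sym (negbTE ij) !subn0.
by case: (g i) => [|gi]; case: (g j) => [|gj] //=; rewrite msub1C.
Qed.

Lemma lmulC v w f g : lmul v (lmul w f) g = lmul w (lmul v f) g.
Proof.
rewrite /lmul; under eq_bigr do rewrite xmul_sum_scale mulr_sumr.
under [RHS]eq_bigr do rewrite xmul_sum_scale mulr_sumr.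
rewrite exchange_big; apply: eq_bigr => i _; apply: eq_bigr => j _.
by rewrite xmulC mulrCA.
Qed.

Lemma amul_lmulr h v f g : amul h (lmul v f) g = lmul v (amul h f) g.
Proof.
rewrite /lmul amulE; under [LHS]eq_bigr do rewrite mulr_sumr.
rewrite exchange_big /=; apply: eq_bigr => i _; rewrite /xmul.
case: ifPn => gi; last first.
  rewrite mulr0 big1 // => d _.
  have -> : (0 < mon_sub g (mon_val d) i)%N = false.
    by rewrite ffunE; move: gi; rewrite -eqn0Ngt => /eqP ->.
  by rewrite !mulr0.
have hb1 j : (msub1 g i j <= deg (msub1 g i))%N by apply: mon_le_deg.
have hb2 j : (msub1 g i j <= deg g)%N.
  by rewrite ffunE (leq_trans (leq_subr _ _) (mon_le_deg _ _)).
rewrite amulE (sum_mon_le_bound (fun d => h d * f (mon_sub (msub1 g i) d)) hb1 hb2).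
rewrite mulr_sumr big_mkcond [RHS]big_mkcond /=; apply: eq_bigr => d _.
rewrite mon_le_msub1 //; case: (mon_le _ _) => //=.
rewrite ffunE [mon_val d i]ffunE subn_gt0; case: ifP => _; rewrite ?mulr0 //.
by rewrite mulrCA; congr (_ * (_ * f _)); apply/ffunP=> j; rewrite !ffunE subnAC.
Qed.

Definition dcser p i : cser := fun g => ((g i).+1)%:R * p (madd1 g i).

Lemma eq_dcser p q i g : (forall x, x != mon0 N -> p x = q x) -> dcser p i g = dcser q i g.
Proof. by move=> E; rewrite /dcser E // madd1_neq0. Qed.

Lemma dcser_sum (I : finType) (F : I -> cser) j g :
  dcser (fun x => \sum_r F r x) j g = \sum_r dcser (F r) j g.
Proof. by rewrite /dcser mulr_sumr. Qed.

Lemma dcser_lmul v f j g : dcser (lmul v f) j g = v 0 j * f g + lmul v (dcser f j) g.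
Proof.
rewrite /dcser /lmul /xmul mulr_sumr (bigD1 j) //= [in RHS](bigD1 j) //= addrA.
congr (_ + _).
  rewrite madd1E eqxx addn1 /= msub1K msub1E eqxx.
  case: (posnP (g j)) => [->|gj]; first by rewrite mulr0 addr0 mul1r.
  rewrite (madd1K gj) subn1 prednK // mulrCA -mulrDr; congr (_ * _).
  by rewrite -natr1 mulrDl mul1r addrC.
apply: eq_bigr => i ij; rewrite madd1E (negbTE ij) addn0.
rewrite mulrCA; congr (_ * _); case: ifP => gi; last by rewrite mulr0.
by rewrite msub1E eq_sym (negbTE ij) subn0 msub1_madd1.
Qed.

Lemma dcser_alin v j g : dcser (alin v) j g = ccst (v 0 j) g.
Proof.
rewrite /dcser /alin /ccst; case: eqP => [->|gn].
  rewrite ffunE mul1r (bigD1 j) //= big1 ?addr0; first by rewrite -mon_unitE eqxx mulr1.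
  move=> i ij; rewrite -mon_unitE; case: eqP => [/ffunP/(_ j)|]; last by rewrite mulr0.
  by rewrite !ffunE eqxx eq_sym (negbTE ij).
rewrite big1 ?mulr0 // => i _; case: eqP => [E|]; last by rewrite mulr0.
case: gn; apply/eqP; rewrite -deg_eq0.
by move: (congr1 deg E); rewrite deg_madd1 (mon_unitE i) deg_madd1 => -[->]; rewrite deg_eq0.
Qed.

Lemma sum_xmul_dcser q g : \sum_j xmul j (dcser q j) g = (deg g)%:R * q g.
Proof.
rewrite /deg natr_sum mulr_suml; apply: eq_bigr => j _.
rewrite /xmul /dcser; case: (posnP (g j)) => [->|gj]; first by rewrite mul0r.
by rewrite msub1E eqxx subn1 prednK // madd1K.
Qed.

Definition deg_scale k p : cser := fun g => p g / (deg g + k)%:R.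

Definition euler_inv p : cser := fun g => if deg g == 0%N then 0 else p g / (deg g)%:R.

Lemma lmul_deg_scale k v f g : deg_scale k (lmul v f) g = lmul v (deg_scale k.+1 f) g.
Proof.
rewrite /deg_scale /lmul mulr_suml; apply: eq_bigr => i _; rewrite -mulrA; congr (_ * _).
rewrite /xmul; case: ifP => gi; last by rewrite mul0r.
by rewrite deg_msub1 // addnS -addSn prednK // (leq_trans gi (mon_le_deg g i)).
Qed.

Lemma dcser_euler_inv p j g : dcser (euler_inv p) j g = deg_scale 1 (dcser p j) g.
Proof. by rewrite /dcser /euler_inv /deg_scale deg_madd1 addn1 /= mulrA. Qed.

Definition poisson (W : 'M[K]_N) p q : cser :=
  fun g => \sum_i \sum_j W i j * amul (dcser p i) (dcser q j) g.

Lemma poisson_alinr W p v g : poisson W p (alin v) g = \sum_i (v *m W^T) 0 i * dcser p i g.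
Proof.
apply: eq_bigr => i _; rewrite mxE mulr_suml; apply: eq_bigr => j _.
rewrite (@eq_amul _ (dcser p i) _ (ccst (v 0 j))) // ?amul_ccstr; last exact: dcser_alin.
by rewrite !mxE mulrCA mulrA.
Qed.

Lemma poisson_alinl W p v g : poisson W (alin v) p g = \sum_j (v *m W) 0 j * dcser p j g.
Proof.
rewrite /poisson exchange_big; apply: eq_bigr => j _; rewrite mxE mulr_suml; apply: eq_bigr => i _.
rewrite (@eq_amul _ (ccst (v 0 i)) _ (dcser p j)) // ?amul_ccstl; last exact: dcser_alin.
by rewrite mulrCA mulrA.
Qed.

Lemma eq_poisson W p1 p2 q1 q2 g :
    (forall x, x != mon0 N -> p1 x = p2 x) -> (forall x, x != mon0 N -> q1 x = q2 x) ->
  poisson W p1 q1 g = poisson W p2 q2 g.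
Proof.
move=> Ep Eq; apply: eq_bigr => i _; apply: eq_bigr => j _; congr (_ * _).
by apply: eq_amul => x; [apply: eq_dcser Ep | apply: eq_dcser Eq].
Qed.

Section Ideal.
Variables (m : nat) (X : 'M[K]_(m, N)).

Definition in_ideal p := exists f : 'I_m -> cser, forall g, p g = \sum_r lmul (row r X) (f r) g.

Lemma in_AxE p : in_Ax X p <-> in_ideal p.
Proof.
split=> [[f ->]|[f Hf]]; exists f.
  by move=> g; apply: eq_bigr => r _; rewrite amul_alinr.
by apply: functional_extensionality => g; rewrite Hf; apply: eq_bigr => r _; rewrite amul_alinr.
Qed.

Lemma in_ideal_ext p q : p =1 q -> in_ideal p -> in_ideal q.
Proof. by move=> E [f Hf]; exists f => g; rewrite -E Hf. Qed.

Lemma in_ideal0 : in_ideal (fun _ => 0).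
Proof. by exists (fun _ _ => 0) => g; rewrite big1 // => r _; rewrite lmul0. Qed.

Lemma in_ideal_add p q : in_ideal p -> in_ideal q -> in_ideal (fun g => p g + q g).
Proof.
move=> [f Hf] [h Hh]; exists (fun r x => f r x + h r x) => g.
by rewrite Hf Hh -big_split; apply: eq_bigr => r _; rewrite lmul_add.
Qed.

Lemma in_ideal_scale c p : in_ideal p -> in_ideal (fun g => c * p g).
Proof.
move=> [f Hf]; exists (fun r x => c * f r x) => g.
by rewrite Hf mulr_sumr; apply: eq_bigr => r _; rewrite lmul_scale.
Qed.

Lemma in_ideal_sub p q : in_ideal p -> in_ideal q -> in_ideal (fun g => p g - q g).
Proof.
move=> Hp /(in_ideal_scale (-1)) Hq.
by apply: in_ideal_ext (in_ideal_add Hp Hq) => g; rewrite mulN1r.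
Qed.

Lemma in_ideal_sum (I : finType) (F : I -> cser) :
  (forall x, in_ideal (F x)) -> in_ideal (fun g => \sum_x F x g).
Proof.
move=> H; suff: forall s : seq I, in_ideal (fun g => \sum_(x <- s) F x g) by apply.
elim=> [|a s IH]; first by apply: in_ideal_ext in_ideal0 => g; rewrite big_nil.
by apply: in_ideal_ext (in_ideal_add (H a) IH) => g; rewrite big_cons.
Qed.

Lemma in_ideal_mon0 p : in_ideal p -> p (mon0 N) = 0.
Proof. by move=> [f ->]; rewrite big1 // => r _; rewrite lmul_mon0. Qed.

Lemma in_ideal_lmul_row t h : in_ideal (lmul (row t X) h).
Proof.
exists (fun r x => if r == t then h x else 0) => g.
rewrite (bigD1 t) //= big1 ?addr0; first by apply: eq_lmul => x; rewrite eqxx.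
by move=> r rt; rewrite (@eq_lmul _ _ (fun _ => 0)) ?lmul0 // => x; rewrite (negbTE rt).
Qed.

Lemma in_ideal_alin_row t : in_ideal (alin (row t X)).
Proof. by apply: in_ideal_ext (in_ideal_lmul_row t (ccst 1)) => g; rewrite alin_lmul. Qed.

Lemma in_ideal_lmul v p : in_ideal p -> in_ideal (lmul v p).
Proof.
move=> [f Hf]; exists (fun r => lmul v (f r)) => g.
by rewrite (@eq_lmul v p _ g Hf) lmul_sum; apply: eq_bigr => r _; rewrite lmulC.
Qed.

Lemma in_ideal_amulr h p : in_ideal p -> in_ideal (amul h p).
Proof.
move=> [f Hf]; exists (fun r => amul h (f r)) => g.
rewrite (@eq_amul _ h _ (fun g => \sum_r lmul (row r X) (f r) g)) //.
by rewrite amul_sumr; apply: eq_bigr => r _; rewrite amul_lmulr.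
Qed.

Lemma in_ideal_amull h p : in_ideal p -> in_ideal (amul p h).
Proof. by move/(in_ideal_amulr h); apply: in_ideal_ext => g; rewrite amulC. Qed.

Lemma in_ideal_deg_scale k p : in_ideal p -> in_ideal (deg_scale k p).
Proof.
move=> [f Hf]; exists (fun r => deg_scale k.+1 (f r)) => g.
by rewrite /deg_scale Hf mulr_suml; apply: eq_bigr => r _; rewrite -lmul_deg_scale.
Qed.

Lemma dcser_in_ideal p (f : 'I_m -> cser) i :
  (forall g, p g = \sum_r lmul (row r X) (f r) g) ->
  in_ideal (fun g => dcser p i g - \sum_r X r i * f r g).
Proof.
move=> Hp; exists (fun r => dcser (f r) i) => g.
rewrite (eq_dcser _ _ (fun x _ => Hp x)) dcser_sum.
under eq_bigr do rewrite dcser_lmul mxE.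
by rewrite big_split /= addrAC subrr add0r.
Qed.

(* Writing [d_i p = LF_i + (ideal)] and [d_j q = LH_j + (ideal)] with [LF_i, LH_j]
   combinations of the columns of [X], the only term of [{p, q}] not visibly in the
   ideal is the quadratic form [X W X^T], which vanishes since [x] is isotropic. *)
Lemma poisson_in_ideal (W : 'M[K]_N) p q :
  X *m W *m X^T = 0 -> in_ideal p -> in_ideal q -> in_ideal (poisson W p q).
Proof.
move=> XW [f Hf] [h Hh].
pose LF i g := \sum_s X s i * f s g; pose LH j g := \sum_r X r j * h r g.
pose A i g := dcser p i g - LF i g; pose B j g := dcser q j g - LH j g.
have amul_split i j g : amul (dcser p i) (dcser q j) g =
    (amul (A i) (dcser q j) g + amul (LF i) (B j) g) +
    \sum_s \sum_r X s i * X r j * amul (f s) (h r) g.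
  rewrite (@eq_amul _ (fun g => A i g + LF i g) _ (dcser q j)); last by [].
    rewrite amul_addl -addrA; congr (_ + _).
    rewrite (@eq_amul _ (LF i) _ (fun g => B j g + LH j g)) //; last first.
      by move=> x; rewrite /B subrK.
    rewrite amulC amul_addl [amul (B j) _ _]amulC [amul (LH j) _ _]amulC; congr (_ + _).
    rewrite /LF amul_suml; apply: eq_bigr => s _.
    rewrite amul_scalel /LH amul_sumr mulr_sumr; apply: eq_bigr => r _.
    by rewrite amulC amul_scalel amulC mulrA.
  by move=> x; rewrite /A subrK.
apply: (@in_ideal_ext (fun g => \sum_i \sum_j W i j *
                         (amul (A i) (dcser q j) g + amul (LF i) (B j) g))).
  move=> g; rewrite /poisson.
  under [RHS]eq_bigr do under eq_bigr do rewrite amul_split mulrDr.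
  under [RHS]eq_bigr do rewrite big_split /=.
  rewrite big_split /= sum_quadratic_mx XW.
  by rewrite [X in _ + X]big1 ?addr0 // => s _; rewrite big1 // => r _; rewrite mxE mul0r.
apply: in_ideal_sum => i; apply: in_ideal_sum => j; apply: in_ideal_scale.
by apply: in_ideal_add; [apply: in_ideal_amull | apply: in_ideal_amulr];
  apply: dcser_in_ideal.
Qed.

Lemma lmul_row_dcser (Y C : 'M[K]_(m, N)) s q g :
  lmul (row s Y) (fun x => \sum_j C s j * dcser q j x) g =
  \sum_k \sum_j Y s k * C s j * xmul k (dcser q j) g.
Proof.
apply: eq_bigr => k _; rewrite xmul_sum_scale mulr_sumr mxE.
by apply: eq_bigr => j _; rewrite mulrA.
Qed.

(* Euler's identity [p = sum_k x_k d_k (E^-1 p)] and the splitting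
   [x_k = sum_s X s k (Wt s) + sum_r Lm r k (U r)] of the coordinates express [p]
   through the derivatives [sum_j U r j d_j p], which lie in the ideal. *)
Lemma in_ideal_euler (U Wt Lm : 'M[K]_(m, N)) p :
  [pchar K] =i pred0 ->
  X^T *m Wt + Lm^T *m U = 1%:M ->
  (forall r, in_ideal (fun g => \sum_j U r j * dcser p j g)) ->
  p (mon0 N) = 0 ->
  in_ideal p.
Proof.
move=> ch0 Hid HU p0.
set q := euler_inv p.
have Eu g : p g = \sum_j xmul j (dcser q j) g.
  rewrite sum_xmul_dcser /q /euler_inv; case: eqP => [/eqP|dg].
    by rewrite deg_eq0 => /eqP ->; rewrite p0 mulr0.
  by rewrite mulrCA mulfV ?mulr1 //; move/pcharf0P: ch0 => ->; apply/eqP.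
apply: (@in_ideal_ext
  (fun g => \sum_s lmul (row s X) (fun x => \sum_j Wt s j * dcser q j x) g +
            \sum_r lmul (row r Lm) (fun x => \sum_j U r j * dcser q j x) g)).
  move=> g; rewrite Eu.
  under eq_bigr do rewrite lmul_row_dcser.
  under [in X in _ + X]eq_bigr do rewrite lmul_row_dcser.
  rewrite -[Z in Z + _]exchange_big3 -[Z in _ + Z]exchange_big3 -big_split /=.
  transitivity (\sum_k \sum_j (1%:M : 'M[K]_N) k j * xmul k (dcser q j) g).
    rewrite -Hid; apply: eq_bigr => k _; rewrite -big_split /=; apply: eq_bigr => j _.
    by rewrite !mxE mulrDl !mulr_suml; congr (_ + _); apply: eq_bigr => s _; rewrite !mxE.
  apply: eq_bigr => k _; rewrite (bigD1 k) //= big1 ?addr0; first by rewrite mxE eqxx mul1r.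
  by move=> j jk; rewrite mxE eq_sym (negbTE jk) mul0r.
apply: in_ideal_add; first by exists (fun s x => \sum_j Wt s j * dcser q j x).
apply: in_ideal_sum => r; apply: in_ideal_lmul.
apply: in_ideal_ext (in_ideal_deg_scale 1 (HU r)) => g.
by rewrite /deg_scale mulr_suml; apply: eq_bigr => j _; rewrite /q dcser_euler_inv /deg_scale mulrA.
Qed.

End Ideal.

Section Star.
Variable W : 'M[K]_N.
Local Notation ser := (ser K N).
Implicit Types a b d : ser.

Lemma cprod_coef1 a b g : cprod a b 1 g = amul (a 0%N) (b 1%N) g + amul (a 1%N) (b 0%N) g.
Proof. by rewrite /cprod big_ord_recr /= big_ord1. Qed.

Lemma star_coef0 a b g : star W a b 0 g = amul (a 0%N) (b 0%N) g.
Proof.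
rewrite /star big_ord1 /= big_tuple0 big_tuple0 big_ord0 mul1r expn0 fact0 invr1 mul1r.
by rewrite /cprod big_ord1.
Qed.

Lemma star_coef1 a b g :
  star W a b 1 g = cprod a b 1 g + 2%:R^-1 * poisson W (a 0%N) (b 0%N) g.
Proof.
rewrite /star big_ord_recr /= big_ord1 /= big_tuple0 big_tuple0 big_ord0.
rewrite mul1r expn0 fact0 invr1 mul1r; congr (_ + _ * _).
rewrite big_tuple1; apply: eq_bigr => i _; rewrite big_tuple1; apply: eq_bigr => j _.
by rewrite big_ord1 /cprod big_ord1.
Qed.

Lemma star_commutator0 a b g : sub_ser (star W a b) (star W b a) 0 g = 0.
Proof. by rewrite /sub_ser !star_coef0 amulC subrr. Qed.

Lemma star_commutator1 a b g : sub_ser (star W a b) (star W b a) 1 g =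
  2%:R^-1 * (poisson W (a 0%N) (b 0%N) g - poisson W (b 0%N) (a 0%N) g).
Proof.
rewrite /sub_ser !star_coef1 !cprod_coef1.
rewrite [amul (b 0%N) (a 1%N) g]amulC [amul (b 1%N) (a 0%N) g]amulC.
ring.
Qed.

Definition ser_alin v : ser := fun k g => if k == 0%N then alin v g else 0.

Lemma star_commutator1_alin v a g : W^T = - W -> (2%:R : K) != 0 ->
  sub_ser (star W a (ser_alin v)) (star W (ser_alin v) a) 1 g =
  \sum_j (v *m W^T) 0 j * dcser (a 0%N) j g.
Proof.
move=> WT n2; rewrite star_commutator1 poisson_alinr poisson_alinl.
have -> : v *m W = - (v *m W^T) by rewrite WT mulmxN opprK.
under [X in _ - X]eq_bigr do rewrite mxE mulNr.
set T := \sum_j _; rewrite sumrN opprK.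
by rewrite -[T + T]mulr2n -[T *+ 2]mulr_natl mulrA mulVf ?mul1r.
Qed.

Lemma dsers_hbar_mon (I : seq 'I_N) k g : g != mon0 N -> dsers (@hbar K N) I k g = 0.
Proof.
elim: I k g => [|i I IH] k g gn /=; first by rewrite /hbar (negbTE gn) andbF.
by rewrite /dser IH ?mulr0 // madd1_neq0.
Qed.

Lemma dsers_hbar (I : seq 'I_N) k g : I != [::] -> dsers (@hbar K N) I k g = 0.
Proof. by case: I => [//|i I] _ /=; rewrite /dser dsers_hbar_mon ?mulr0 // madd1_neq0. Qed.

Lemma cprod0l a b k g : (forall k g, a k g = 0) -> cprod a b k g = 0.
Proof. by move=> a0; rewrite /cprod big1 // => k1 _; rewrite big1 // => d _; rewrite a0 mul0r. Qed.

Lemma star_hbarl d k g : star W (@hbar K N) d k g = if k is k'.+1 then d k' g else 0.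
Proof.
rewrite /star big_ord_recl /= big_tuple0 big_tuple0 big_ord0 mul1r expn0 fact0 invr1 mul1r.
rewrite big1 ?addr0; last first.
  move=> i _; rewrite big1 ?mulr0 // => I _; rewrite big1 // => J _.
  rewrite cprod0l ?mulr0 // => k1 g1; apply: dsers_hbar.
  by case: I => [[|x s] //].
rewrite subn0; case: k => [|k].
  by rewrite /cprod big_ord1 big1 // => e _; rewrite /hbar /= mul0r.
rewrite /cprod (bigD1 (Ordinal (isT : (1 < k.+2)%N))) //= [Z in _ + Z]big1 ?addr0; last first.
  move=> [k1 Hk] /= H; rewrite big1 // => e _; rewrite /hbar.
  case: eqP => [E|]; last by rewrite mul0r.
  by move: H; rewrite /eq_op /= E.
transitivity (amul (ccst 1) (d k) g); last by rewrite amul_ccstl mul1r.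
by rewrite /amul; apply: eq_bigr => e _; rewrite /hbar /ccst /= subn1.
Qed.

End Star.

End PowerSeries.

Lemma lagrangian_splitting (K : fieldType) (n : nat) (W : 'M[K]_(n.*2)) (X : 'M[K]_(n, n.*2)) :
  \det W != 0 -> \rank X = n -> X *m W *m X^T = 0 ->
  exists Wt Lm : 'M[K]_(n, n.*2), X^T *m Wt + Lm^T *m (X *m W^T) = 1%:M.
Proof.
move=> dW rX XW.
have [B XB] : exists B, X *m B = 1%:M by apply/row_freeP; rewrite /row_free rX.
set Q := 1%:M - X^T *m B^T.
have QK : (Q <= kermx X^T)%MS.
  apply/sub_kermxP; rewrite /Q mulmxBl mul1mx -mulmxA -trmx_mul XB trmx1 mulmx1.
  by rewrite subrr.
have UK : (X *m W^T <= kermx X^T)%MS.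
  by apply/sub_kermxP; rewrite -[X in X *m _ *m _]trmxK -!trmx_mul mulmxA XW trmx0.
(* [x] is Lagrangian: the rows of [X W^T], a basis of the W-orthogonal of [x],
   span the whole kernel of [X^T]. *)
have KU : (kermx X^T <= X *m W^T)%MS.
  have rU : \rank (X *m W^T) = n.
    by rewrite mxrankMfree ?rX // row_free_unit unitmx_tr unitmxE unitfE.
  have rK : \rank (kermx X^T) = n by rewrite mxrank_ker mxrank_tr rX -addnn addnK.
  by move: (mxrank_leqif_sup UK) => [_ <-]; rewrite rU rK.
have [D QD] := submxP (submx_trans QK KU).
by exists B^T, D^T; rewrite trmxK -QD /Q addrC subrK.
Qed.

Section HeisenbergIdeal.
Variables (K : fieldType) (N m : nat) (W : 'M[K]_N) (X : 'M[K]_(m, N)).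
Implicit Types a b : ser K N.

Lemma inJ_mon0 a : inJ X a -> a 0%N (mon0 N) = 0.
Proof. by move/in_AxE/in_ideal_mon0. Qed.

Lemma inJ_G_rel_eq a b : inJ X a -> inJ X b -> G_rel a b -> a = b.
Proof.
move=> /inJ_mon0 a0 /inJ_mon0 b0 [c Ec].
have c0 : c = 0.
  by move: (congr1 (fun f => f 0%N (mon0 N)) Ec); rewrite /= a0 b0 /cst !eqxx add0r.
rewrite Ec c0; apply: functional_extensionality => k; apply: functional_extensionality => g.
by rewrite /cst; case: ifP; rewrite addr0.
Qed.

Lemma G_rel_inJ_in_GJ a b : X *m W *m X^T = 0 -> inJ X b -> G_rel a b -> in_GJ W X a.
Proof.
move=> XW /in_AxE Hb [c Ec] b' /in_AxE Hb'.
have Eab x : x != mon0 N -> a 0%N x = b 0%N x.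
  by move=> xn; rewrite Ec /cst (negbTE xn) andbF addr0.
exists (fun k g => sub_ser (star W a b') (star W b' a) k.+1 g); split.
  apply/in_AxE.
  apply: in_ideal_ext (in_ideal_scale 2%:R^-1 (in_ideal_sub (poisson_in_ideal XW Hb Hb')
                                                           (poisson_in_ideal XW Hb' Hb))) => g.
  rewrite /proj star_commutator1 (eq_poisson W g Eab (fun _ _ => erefl (b' 0%N _))).
  by rewrite (eq_poisson W g (fun _ _ => erefl (b' 0%N _)) Eab).
apply: functional_extensionality => k; apply: functional_extensionality => g.
by rewrite star_hbarl; case: k => [|k] //; rewrite star_commutator0.
Qed.

Lemma in_GJ_G_rel_inJ a (Wt Lm : 'M[K]_(m, N)) :
  [pchar K] =i pred0 -> W^T = - W -> X^T *m Wt + Lm^T *m (X *m W^T) = 1%:M ->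
  in_GJ W X a -> exists b, inJ X b /\ G_rel a b.
Proof.
move=> ch0 WT Hid Ha.
set c := a 0%N (mon0 N); set b := fun k g => a k g - cst c k g.
exists b; split; last first.
  by exists c; apply: functional_extensionality => k; apply: functional_extensionality => g;
    rewrite subrK.
have Eab x : x != mon0 N -> b 0%N x = a 0%N x by rewrite /b /cst => /negbTE ->; rewrite subr0.
apply/in_AxE; apply: (in_ideal_euler ch0 Hid); last by rewrite /proj /b /cst !eqxx subrr.
move=> r; have Hx : inJ X (ser_alin (row r X)).
  by apply/in_AxE; apply: in_ideal_ext (in_ideal_alin_row X r).
have [d [/in_AxE Hd Hs]] := Ha _ Hx.
apply: in_ideal_ext Hd => g.
have n2 : (2%:R : K) != 0 by move/pcharf0P: ch0 => ->.
have Ed := congr1 (fun s => s 1%N g) Hs.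
rewrite /= star_hbarl star_commutator1_alin // in Ed.
rewrite [proj d g]Ed.
apply: eq_bigr => j _; rewrite -row_mul mxE; congr (_ * _); exact/esym/eq_dcser.
Qed.

End HeisenbergIdeal.

Theorem lemma3p1 (K : fieldType) (n : nat) (W : 'M[K]_(n.*2)) (X : 'M[K]_(n, n.*2)) :
  [pchar K] =i pred0 ->
  W^T = - W -> \det W != 0 ->
  \rank X = n -> X *m W *m X^T = 0 ->
  (forall a b : ser K n.*2, inJ X a -> inJ X b -> G_rel a b -> a = b) /\
  (forall a : ser K n.*2, in_GJ W X a <-> exists b, inJ X b /\ G_rel a b).
Proof.
move=> ch0 WT dW rX XW; split; first exact: inJ_G_rel_eq.
have [Wt [Lm Hid]] := lagrangian_splitting dW rX XW.
move=> a; split; first exact: in_GJ_G_rel_inJ ch0 WT Hid.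
by case=> b [Hb Hab]; apply: G_rel_inJ_in_GJ Hb Hab.
Qed.
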